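(* Let $X$ be a real Banach space with a normalized boundedly complete basis $\mathcal B=(e_n)_{n=1}^\infty$ with biorthogonal functionals $(e_n^* )$, and let $\mathcal E=(\varepsilon_n)_{n=1}^\infty$ be a sequence of nonnegative numbers. If the brick $K_{\mathcal B,\mathcal E}$ is norm-bounded, then it contains an extreme point.
   Context: The brick is $K_{\mathcal B,\mathcal E}=\{x\in X:\ |e_n^*(x)|\le\varepsilon_n \text{ for all } n\}$. A basis is boundedly complete if for every scalar sequence $(a_n)$, $\sup_n\|\sum_{k=1}^na_ke_k\|<\infty$ implies convergence of $\sum_n a_ne_n$. A point $x_0\in A$ is an extreme point of $A$ if for every nonzero $x\in X$ there is $\lambda\in[-1,1]$ with $x_0+\lambda x\notin A$. *)

From HB Require Import structures.
From mathcomp Require Import all_boot all_order all_algebra.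
From mathcomp Require Import all_classical all_reals all_analysis.
Set Implicit Arguments. Unset Strict Implicit. Unset Printing Implicit Defensive.
Import Order.TTheory GRing.Theory Num.Theory.
Import numFieldNormedType.Exports.
Local Open Scope classical_set_scope.
Local Open Scope ring_scope.

Section Defs.
Variables (R : realType) (X : completeNormedModType R).

Definition psum (a : nat -> R) (e : nat -> X) : nat -> X :=
  fun N => \sum_(k < N) a k *: e k.

Definition schauder_basis (e : nat -> X) : Prop :=
  forall x : X, exists! a : nat -> R, psum a e @ \oo --> x.

(* es are the biorthogonal (coordinate) functionals of the basis e:
   x = sum_n es n x e_n for every x *)
Definition coord_functionals (e : nat -> X) (es : nat -> X -> R) : Prop :=
  forall x : X, psum (fun n => es n x) e @ \oo --> x.

Definition normalized (e : nat -> X) : Prop := forall n, `|e n| = 1.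

Definition boundedly_complete (e : nat -> X) : Prop :=
  forall a : nat -> R,
    (exists M : R, forall N, `|psum a e N| <= M) -> cvg (psum a e @ \oo).

Definition brick (es : nat -> X -> R) (eps : nat -> R) : set X :=
  [set x | forall n, `|es n x| <= eps n].

Definition norm_bounded (A : set X) : Prop :=
  exists M : R, forall x, A x -> `|x| <= M.

Definition extreme_point (A : set X) (x0 : X) : Prop :=
  A x0 /\ forall x : X, x != 0 ->
    exists2 l : R, -1 <= l <= 1 & ~ A (x0 + l *: x).
End Defs.

From HB Require Import structures.
From mathcomp Require Import all_boot all_order all_algebra.
From mathcomp Require Import all_classical all_reals all_analysis.
Import Order.TTheory GRing.Theory Num.Theory.
Import numFieldNormedType.Exports.
Local Open Scope classical_set_scope.
Local Open Scope ring_scope.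

(* The partial sums of [sum eps_n e_n] lie in the brick, so they are bounded
   and, by bounded completeness, converge to a point [x0] with coordinates
   [eps_n].  This "corner" is extreme: if [x <> 0] then some coordinate
   [e_n^* x] is nonzero, and moving from [x0] by [+x] or [-x] with the sign of
   [e_n^* x] pushes the [n]-th coordinate above [eps_n]. *)

Section SchauderCoordinates.
Context {R : realType} {X : completeNormedModType R}.
Context {e : nat -> X} {es : nat -> X -> R}.
Hypotheses (e_basis : schauder_basis e) (es_coord : coord_functionals e es).

Lemma coord_of_psum_cvg {a : nat -> R} {x : X} :
  psum a e @ \oo --> x -> forall n, es n x = a n.
Proof.
move=> a_x n; have [b [_ b_uniq]] := e_basis x.
by rewrite -[a](b_uniq _ a_x) (b_uniq _ (es_coord x)).
Qed.

Lemma psumD_scale (a b : nat -> R) (l : R) (N : nat) :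
  psum (fun k => a k + l * b k) e N = psum a e N + l *: psum b e N.
Proof.
rewrite /psum scaler_sumr -big_split /=; apply: eq_bigr => k _.
by rewrite scalerDl scalerA.
Qed.

Lemma coordD_scale (x y : X) (l : R) (n : nat) :
  es n (x + l *: y) = es n x + l * es n y.
Proof.
apply: (@coord_of_psum_cvg (fun k => es k x + l * es k y)).
have -> : psum (fun k => es k x + l * es k y) e =
          fun N => psum (es^~ x) e N + l *: psum (es^~ y) e N.
  by apply/funext => N; rewrite psumD_scale.
exact: cvgD (es_coord x) (cvgZ (cvg_cst l) (es_coord y)).
Qed.

Lemma psum0 (N : nat) : psum (fun=> 0) e N = 0.
Proof. by rewrite /psum big1 // => i _; rewrite scale0r. Qed.

Lemma coord_neq0 {x : X} : x != 0 -> exists n, es n x != 0.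
Proof.
move=> x_neq0; apply: contrapT => all_coord0.
have es_x0 : es^~ x = fun=> 0.
  by apply/funext => n; apply/eqP/negPn/negP => ?; apply: all_coord0; exists n.
have psum_x := es_coord x; rewrite es_x0 in psum_x.
have psum_0 : psum (fun=> 0) e @ \oo --> (0 : X).
  by apply: cvg_near_cst; apply: nearW => N; rewrite psum0.
by move: x_neq0; rewrite (cvg_unique _ psum_x psum_0) // eqxx.
Qed.

(* Truncating [a] at [N] gives a finitely supported expansion of the [N]-th
   partial sum, so the coordinates of that partial sum are read off from [a]. *)
Lemma coord_psum (a : nat -> R) (N n : nat) :
  es n (psum a e N) = if (n < N)%N then a n else 0.
Proof.
apply: (@coord_of_psum_cvg (fun k => if (k < N)%N then a k else 0)).
apply: cvg_near_cst; near=> K.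
have N_le_K : (N <= K)%N by near: K; exact: nbhs_infty_ge.
rewrite /psum -(subnKC N_le_K) big_split_ord /= [X in _ + X]big1 ?addr0.
  by apply: eq_bigr => i _; rewrite ltn_ord.
by move=> i _; rewrite ltnNge leq_addr scale0r.
Unshelve. all: by end_near.
Qed.

Lemma psum_in_brick (eps : nat -> R) (N : nat) :
  (forall n, 0 <= eps n) -> brick es eps (psum eps e N).
Proof.
move=> eps_ge0 n; rewrite coord_psum.
by case: ifP => _; rewrite ?normr0 ?ger0_norm.
Qed.

Lemma corner_extreme_point {eps : nat -> R} {x0 : X} :
  (forall n, 0 <= eps n) -> (forall n, es n x0 = eps n) ->
  extreme_point (brick es eps) x0.
Proof.
move=> eps_ge0 x0_coord; split=> [n|x x_neq0]; first by rewrite x0_coord ger0_norm.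
have [n coord_neq0] := coord_neq0 x_neq0.
exists (Num.sg (es n x)); first by rewrite -ler_norml normr_sg coord_neq0.
move=> /(_ n); rewrite coordD_scale x0_coord -normrEsg ger0_norm ?addr_ge0 //.
by rewrite gerDl leNgt normr_gt0 coord_neq0.
Qed.

End SchauderCoordinates.

Theorem proposition2p10 (R : realType) (X : completeNormedModType R)
  (e : nat -> X) (es : nat -> X -> R) (eps : nat -> R) :
  schauder_basis e -> coord_functionals e es ->
  normalized e -> boundedly_complete e ->
  (forall n, 0 <= eps n) ->
  norm_bounded (brick es eps) ->
  exists x0 : X, extreme_point (brick es eps) x0.
Proof.
move=> e_basis es_coord _ e_bcomplete eps_ge0 [M brick_le_M].
have psum_eps_bounded : exists M, forall N, `|psum eps e N| <= M.
  by exists M => N; apply/brick_le_M/psum_in_brick.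
have /cvg_ex [x0 psum_eps_x0] := e_bcomplete _ psum_eps_bounded.
exists x0; apply: (corner_extreme_point e_basis es_coord eps_ge0).
exact: (coord_of_psum_cvg e_basis es_coord psum_eps_x0).
Qed.
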